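(* Let $n$ be even and let $A$ be an $n\times n$ row substochastic matrix with row sums $r_1,\dots,r_n$. Then there is a listing $x_1,\dots,x_n$ of the row sums (i.e. $x_k=r_{\tau(k)}$ for some permutation $\tau$ of $\{1,\dots,n\}$) such that $$\operatorname{per}(I-A)\le (1+x_1x_2)(1+x_3x_4)\cdots(1+x_{n-1}x_n).$$
   Context: An $n\times n$ matrix is row substochastic if all its entries are nonnegative and each row sum is at most $1$. The permanent is $\operatorname{per}(M)=\sum_{\pi\in S_n}\prod_i m_{i\pi(i)}$, and $I$ is the identity matrix. *)

From HB Require Import structures.
From mathcomp Require Import all_boot all_order all_algebra all_fingroup.
Set Implicit Arguments. Unset Strict Implicit. Unset Printing Implicit Defensive.
Import Order.TTheory GRing.Theory Num.Theory.
Local Open Scope ring_scope.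

Definition per (R : comPzRingType) (n : nat) (M : 'M[R]_n) : R :=
  \sum_(s : 'S_n) \prod_(i < n) M i (s i).

Definition row_substochastic (R : realFieldType) (n : nat) (A : 'M[R]_n) : Prop :=
  (forall i j, 0 <= A i j) /\ (forall i, \sum_(j < n) A i j <= 1).

Definition row_sum (R : pzRingType) (n : nat) (A : 'M[R]_n) (i : 'I_n) : R :=
  \sum_(j < n) A i j.

From HB Require Import structures.
From mathcomp Require Import all_boot all_order all_algebra all_fingroup.
From mathcomp Require Import zify.
Import Order.TTheory GRing.Theory Num.Theory.
Set Implicit Arguments. Unset Strict Implicit. Unset Printing Implicit Defensive.
Local Open Scope ring_scope.

(* Write A = diag(r) W with W row stochastic. Expanding per (I - A) along the
   rows of W makes it a convex combination, over all maps g, of the permanents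
   of I - diag(r) P_g, where P_g is the 0/1 matrix of g. Such a permanent is a
   product of factors in [0, 1] times the sum, over the sets M on which g is a
   fixed-point-free permutation, of prod_(i in M) (- r_i). Splitting off one
   cycle C of g factors this sum as (1 + prod_(i in C) (- r_i)) times the sum
   for g with C made pointwise fixed, and |prod_(i in C) r_i| <= r_a r_(g a)
   for a in C. Induction over the cycles bounds the sum by a product of factors
   1 + r_a r_b over disjoint pairs {a, b}, which is at most the pairing product
   of a suitable listing of all row sums; take the best listing. *)

Section DerangementSets.
Variables (T : finType) (f : T -> T).

Definition derangement_on (M : {set T}) : bool :=
  [forall i in M, (f i \in M) && (f i != i)] && dinjectiveb f M.

Lemma derangement_onP (M : {set T}) :
  reflect ((forall i, i \in M -> f i \in M /\ f i != i) /\ {in M &, injective f})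
          (derangement_on M).
Proof.
apply: (iffP andP) => [[/forall_inP fM /dinjectiveP injM]|[fM injM]].
  by split=> // i /fM/andP.
by split; [apply/forall_inP => i /fM[-> ->] | apply/dinjectiveP].
Qed.

Lemma derangement_on0 : derangement_on set0.
Proof. by apply/derangement_onP; split=> [i|i j]; rewrite inE. Qed.

Lemma derangement_on_imset (M : {set T}) : derangement_on M -> f @: M = M.
Proof.
move=> /derangement_onP[fM injM]; apply/eqP.
rewrite eqEcard card_in_imset // leqnn andbT.
by apply/subsetP => _ /imsetP[x xM ->]; case: (fM x xM).
Qed.

Lemma derangement_on_preim (M : {set T}) i :
  derangement_on M -> f i \in M -> exists2 k, k \in M & f k = f i.
Proof.
by move=> /derangement_on_imset dM; rewrite -{1}dM => /imsetP[k kM ->]; exists k.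
Qed.

Lemma derangement_onI (M N : {set T}) :
  derangement_on M -> derangement_on N -> derangement_on (M :&: N).
Proof.
move=> /derangement_onP[fM injM] /derangement_onP[fN _].
apply/derangement_onP; split=> [i|i j]; rewrite !inE.
  by move=> /andP[/fM[-> ->] /fN[-> _]].
by move=> /andP[iM _] /andP[jM _]; apply: injM.
Qed.

Lemma derangement_onU (M N : {set T}) :
  derangement_on M -> derangement_on N -> derangement_on (M :|: N).
Proof.
move=> dM dN; have [fM injM] := derangement_onP _ dM.
have [fN injN] := derangement_onP _ dN.
have crossed i j : i \in M -> j \in N -> f i = f j -> i = j.
  move=> iM jN fij; have [fiM _] := fM i iM; have [fjN _] := fN j jN.
  have fiMN : f i \in M :&: N by rewrite inE fiM fij fjN.
  have [k] := derangement_on_preim (derangement_onI dM dN) fiMN.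
  rewrite inE => /andP[kM kN] fki.
  by rewrite -(injM k i kM iM fki) (injN k j kN jN) // fki.
apply/derangement_onP; split=> [i|i j]; rewrite !inE.
  by case/orP=> [/fM|/fN] [-> ->]; rewrite ?orbT.
case/orP=> [iM|iN] /orP[jM|jN]; first exact: injM.
- exact: crossed.
- by move=> fij; rewrite (crossed j i) // fij.
- exact: injN.
Qed.

Lemma derangement_onD (M N : {set T}) :
  derangement_on M -> derangement_on N -> N \subset M -> derangement_on (M :\: N).
Proof.
move=> dM dN /subsetP NM; have [fM injM] := derangement_onP _ dM.
apply/derangement_onP; split=> [i|i j]; rewrite !inE; last first.
  by move=> /andP[_ iM] /andP[_ jM]; apply: injM.
move=> /andP[iN iM]; have [-> ->] := fM i iM; rewrite andbT; split=> //.
apply: contra iN => fiN; have [k kN fki] := derangement_on_preim dN fiN.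
by rewrite -(injM k i (NM k kN) iM fki).
Qed.

End DerangementSets.

Section FixOn.
Variables (T : finType) (f : T -> T).

Definition fix_on (C : {set T}) (k : T) : T := if k \in C then k else f k.

Lemma derangement_on_fix_on (C N : {set T}) :
  derangement_on (fix_on C) N = derangement_on f N && [disjoint N & C].
Proof.
have fix_onE i : i \notin C -> fix_on C i = f i by rewrite /fix_on => /negbTE ->.
apply/derangement_onP/andP => [[fN injN]|[/derangement_onP[fN injN] NC]].
  have NnC i : i \in N -> i \notin C.
    by case/fN; rewrite /fix_on; case: (i \in C); rewrite ?eqxx.
  split; last by rewrite disjoint_subset; apply/subsetP => i /NnC.
  apply/derangement_onP; split=> [i iN|i j iN jN]; first by rewrite -fix_onE ?NnC //; apply: fN.
  by rewrite -!fix_onE ?NnC //; apply: injN.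
have NnC i : i \in N -> i \notin C by move=> iN; rewrite (disjointFr NC iN).
split=> [i iN|i j iN jN]; first by rewrite fix_onE ?NnC //; apply: fN.
by rewrite !fix_onE ?NnC //; apply: injN.
Qed.

End FixOn.

Section DerangementPerm.
Variables (T : finType) (f : T -> T).

(* The identity when [M] is not a derangement set, so that it is always injective. *)
Definition derangement_perm_fun (M : {set T}) (k : T) : T :=
  if derangement_on f M && (k \in M) then f k else k.

Lemma derangement_perm_fun_inj (M : {set T}) : injective (derangement_perm_fun M).
Proof.
rewrite /derangement_perm_fun; case: (boolP (derangement_on f M)) => /= [M_der|_ x y //].
have [fM injM] := derangement_onP _ _ M_der.
move=> x y; case: (boolP (x \in M)) => xM; case: (boolP (y \in M)) => yM //=.
- exact: injM.
- by move=> fxy; have [] := fM x xM; rewrite fxy (negbTE yM).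
- by move=> fxy; have [] := fM y yM; rewrite -fxy (negbTE xM).
Qed.

Definition derangement_perm (M : {set T}) : {perm T} := perm (@derangement_perm_fun_inj M).

Lemma derangement_permE (M : {set T}) k :
  derangement_on f M -> derangement_perm M k = if k \in M then f k else k.
Proof. by move=> M_der; rewrite permE /derangement_perm_fun M_der. Qed.

Lemma derangement_perm_moved (M : {set T}) :
  derangement_on f M -> [set k | derangement_perm M k != k] = M.
Proof.
move=> M_der; have [fM _] := derangement_onP _ _ M_der.
apply/setP => k; rewrite inE derangement_permE //.
by case: (boolP (k \in M)) => [/fM[]|]; rewrite ?eqxx.
Qed.

Variable s : {perm T}.
Hypothesis s_f : forall k, (s k == k) || (s k == f k).

Lemma perm_moved_f k : s k != k -> s k = f k.
Proof. by move=> sk; move: (s_f k); rewrite (negbTE sk) => /eqP. Qed.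

Lemma derangement_on_perm_moved : derangement_on f [set k | s k != k].
Proof.
apply/derangement_onP; split=> [i|i j]; rewrite !inE => si.
  by rewrite -perm_moved_f // (inj_eq perm_inj) si.
by move=> sj; rewrite -!perm_moved_f // => /perm_inj.
Qed.

Lemma derangement_perm_of_moved : derangement_perm [set k | s k != k] = s.
Proof.
apply/permP => k; rewrite derangement_permE ?derangement_on_perm_moved // inE.
by case: (boolP (s k == k)) => [/eqP //|/perm_moved_f].
Qed.

End DerangementPerm.

Section DerangementSum.
Variables (R : comPzRingType) (T : finType) (r : T -> R).

Definition signed_weight (M : {set T}) : R := \prod_(i in M) - r i.

Definition derangement_sum (f : T -> T) : R :=
  \sum_(M | derangement_on f M) signed_weight M.

Lemma signed_weightU (M N : {set T}) :
  [disjoint M & N] -> signed_weight (M :|: N) = signed_weight M * signed_weight N.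
Proof. by move=> MN; rewrite /signed_weight -bigU //; apply: eq_bigl => i; rewrite !inE. Qed.

Variables (f : T -> T) (C : {set T}).
Hypotheses (C_der : derangement_on f C) (C_neq0 : C != set0)
  (C_min : forall M, derangement_on f M -> M != set0 -> (#|C| <= #|M|)%N).

Lemma derangement_on_min_disjoint (M : {set T}) :
  derangement_on f M -> ~~ (C \subset M) -> [disjoint M & C].
Proof.
move=> M_der; apply: contraR; rewrite -setI_eq0 => MC_neq0.
have /C_min/(_ MC_neq0) := derangement_onI M_der C_der.
move=> le_C_MC; have /eqP <- : M :&: C == C by rewrite eqEcard subsetIr le_C_MC.
exact: subsetIl.
Qed.

(* A minimal nonempty derangement set [C] is a single cycle of [f], and every
   derangement set of [f] either contains [C] or is disjoint from it. *)
Lemma derangement_sum_fix_on :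
  derangement_sum f = (1 + signed_weight C) * derangement_sum (fix_on f C).
Proof.
rewrite mulrDl mul1r addrC /derangement_sum mulr_sumr.
rewrite (bigID (fun M : {set T} => C \subset M)) /=; congr (_ + _); last first.
  apply: eq_bigl => M; rewrite derangement_on_fix_on.
  apply: andb_id2l => M_der; apply/idP/idP; first exact: derangement_on_min_disjoint.
  have [c cC] := set0Pn _ C_neq0.
  by move=> MC; apply/negP => /subsetP/(_ c cC); rewrite (disjointFl MC cC).
rewrite (reindex_onto (fun N => N :|: C) (fun M => M :\: C)) /=; last first.
  by move=> M /andP[_ CM]; rewrite setUC -{1}(setIidPr CM) setID.
apply: eq_big => N.
  rewrite derangement_on_fix_on subsetUr andbT setDUl setDv setU0.
  apply/andP/andP => [[NC_der /eqP NCN]|[N_der /setDidPl NCN]]; last first.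
    by rewrite NCN eqxx derangement_onU.
  have := derangement_onD NC_der C_der (subsetUr N C).
  by rewrite setDUl setDv setU0 NCN => ->; split; last apply/setDidPl.
move=> /andP[_ /eqP]; rewrite setDUl setDv setU0 => /setDidPl NC.
by rewrite mulrC signed_weightU.
Qed.

End DerangementSum.

Fixpoint pairs_prod (R : pzSemiRingType) (l : seq R) : R :=
  if l is a :: b :: l' then (1 + a * b) * pairs_prod l' else 1.

Section DerangementSumBound.
Variables (R : realFieldType) (T : finType) (r : T -> R).
Hypotheses (r_ge0 : forall i, 0 <= r i) (r_le1 : forall i, r i <= 1).

Lemma norm_signed_weight_le (M : {set T}) a b :
  a \in M -> b \in M -> a != b -> `|signed_weight r M| <= r a * r b.
Proof.
move=> aM bM ab; rewrite /signed_weight normr_prod (bigD1 a) //= (bigD1 b) /=; last first.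
  by rewrite bM eq_sym.
rewrite mulrA !normrN !ger0_norm // -[leRHS]mulr1 ler_wpM2l ?mulr_ge0 //.
by apply: prodr_ile1 => i _; rewrite normr_ge0 normrN ger0_norm ?r_le1.
Qed.

Lemma derangement_sum_bound (f : T -> T) :
  0 <= derangement_sum r f /\
  exists s : seq T, [/\ uniq s, ~~ odd (size s), all (fun i => f i != i) s &
                      derangement_sum r f <= pairs_prod (map r s)].
Proof.
have [k] := ubnP #|[set i | f i != i]|; elim: k f => // k IHk f moved_lt.
have [M0 M0_cycle | no_cycle] :=
  pickP (fun M : {set T} => derangement_on f M && (M != set0)); last first.
  have -> : derangement_sum r f = 1.
    rewrite /derangement_sum (bigD1 set0) ?derangement_on0 //= big1 ?addr0.
      by rewrite /signed_weight big_set0.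
    by move=> M /andP[M_der M_neq0]; have := no_cycle M; rewrite M_der M_neq0.
  by split=> //; exists [::].
have [C /andP[C_der C_neq0] C_min] :=
  @arg_minnP _ M0 (fun M => derangement_on f M && (M != set0)) (fun M => #|M|) M0_cycle.
have {}C_min M : derangement_on f M -> M != set0 -> (#|C| <= #|M|)%N.
  by move=> M_der M_neq0; apply: C_min; rewrite M_der.
have [a aC] := set0Pn _ C_neq0.
have [fC _] := derangement_onP _ _ C_der.
have [faC a_moved] := fC a aC; have [fbC b_moved] := fC _ faC.
set b := f a in faC a_moved fbC b_moved *.
have C_fixed i : i \in C -> fix_on f C i = i by rewrite /fix_on => ->.
have fix_on_moved i : fix_on f C i != i -> f i != i.
  by rewrite /fix_on; case: (i \in C); rewrite ?eqxx.
have fix_on_moved_lt : (#|[set i | fix_on f C i != i]| < k)%N.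
  rewrite -ltnS; apply: leq_trans moved_lt; rewrite ltnS; apply: proper_card.
  apply/properP; split; first by apply/subsetP => i; rewrite !inE; apply: fix_on_moved.
  by exists a; rewrite !inE ?a_moved // C_fixed ?eqxx.
have [IH_ge0 [s [s_uniq s_even s_moved IH_le]]] := IHk _ fix_on_moved_lt.
have ab : a != b by rewrite eq_sym.
have /andP[ge_w le_w] : - (r a * r b) <= signed_weight r C <= r a * r b.
  by rewrite -ler_norml norm_signed_weight_le.
have ab_le1 : r a * r b <= 1 by rewrite mulr_ile1.
have w1_ge0 : 0 <= 1 + signed_weight r C by rewrite -lerBlDl sub0r (le_trans _ ge_w) ?lerN2.
rewrite (derangement_sum_fix_on r C_der C_neq0 C_min); split; first exact: mulr_ge0.
exists [:: a, b & s]; split.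
- rewrite /= inE negb_or eq_sym a_moved s_uniq andbT.
  by apply/andP; split; apply/negP => /(allP s_moved); rewrite C_fixed ?eqxx.
- by rewrite /= negbK.
- rewrite /= a_moved b_moved /=; apply: sub_all s_moved => i; exact: fix_on_moved.
- by apply: ler_pM => //; rewrite lerD2l.
Qed.

End DerangementSumBound.

Section Permanent.
Variables (R : comPzRingType) (n : nat).

Lemma per_sum_rows (I : finType) (F : 'I_n -> I -> 'I_n -> R) :
  per (\matrix_(i, j) \sum_(l : I) F i l j) =
  \sum_(g : {ffun 'I_n -> I}) per (\matrix_(i, j) F i (g i) j).
Proof.
rewrite /per; under eq_bigr do under eq_bigr do rewrite mxE.
under eq_bigr do rewrite bigA_distr_bigA.
rewrite exchange_big; apply: eq_bigr => g _.
by apply: eq_bigr => s _; apply: eq_bigr => i _; rewrite mxE.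
Qed.

Lemma per_scale_rows (c : 'I_n -> R) (M : 'M[R]_n) :
  per (\matrix_(i, j) (c i * M i j)) = (\prod_i c i) * per M.
Proof.
rewrite /per mulr_sumr; apply: eq_bigr => s _.
by rewrite -big_split; apply: eq_bigr => i _; rewrite mxE.
Qed.

Definition weighted_fun_mx (r : 'I_n -> R) (g : 'I_n -> 'I_n) : 'M[R]_n :=
  \matrix_(i, j) (r i * (g i == j)%:R).

Lemma per_sub_weighted_fun_mx (r : 'I_n -> R) (g : 'I_n -> 'I_n) :
  per (1%:M - weighted_fun_mx r g) =
  (\prod_i (1 - r i * (g i == i)%:R)) * derangement_sum r g.
Proof.
pose follows (s : 'S_n) := [forall i, (s i == i) || (s i == g i)].
have entryE i j : (1%:M - weighted_fun_mx r g) i j = (i == j)%:R - r i * (g i == j)%:R.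
  by rewrite !mxE.
rewrite /per (bigID follows) /= [X in _ + X]big1 ?addr0; last first.
  move=> s /forallPn[i]; rewrite negb_or => /andP[si sg].
  by rewrite (bigD1 i) //= entryE eq_sym (negbTE si) eq_sym (negbTE sg) mulr0 subr0 mul0r.
rewrite /derangement_sum mulr_sumr.
rewrite (reindex_onto (derangement_perm g) (fun s : 'S_n => [set i | s i != i])); last first.
  by move=> s /forallP; apply: derangement_perm_of_moved.
have followsE M :
    follows (derangement_perm g M) && ([set i | derangement_perm g M i != i] == M)
    = derangement_on g M.
  case: (boolP (derangement_on g M)) => M_der.
    rewrite derangement_perm_moved // eqxx andbT; apply/forallP => i.
    by rewrite derangement_permE //; case: (i \in M); rewrite eqxx ?orbT.
  apply: contraNF M_der => /andP[/forallP s_g /eqP <-].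
  exact: derangement_on_perm_moved.
apply: eq_big => M; first exact: followsE.
rewrite followsE => M_der; have [gM _] := derangement_onP _ _ M_der.
rewrite [LHS](bigID (mem M)) [X in _ = X * _](bigID (mem M)) /=.
rewrite [X in _ = X * _ * _]big1 ?mul1r => [|i /gM[_ /negbTE->]]; last by rewrite mulr0 subr0.
rewrite mulrC; congr (_ * _); apply: eq_bigr => i iM; rewrite entryE derangement_permE //.
  by rewrite (negbTE iM) eqxx.
by have [_ /negbTE] := gM i iM; rewrite iM eq_sym => ->; rewrite eqxx mulr1 sub0r.
Qed.

End Permanent.

Section PairsProd.
Variable R : realFieldType.

Lemma pairs_prodE (l : seq R) :
  pairs_prod l = \prod_(k < (size l)./2) (1 + l`_k.*2 * l`_k.*2.+1).
Proof.
have [m] := ubnP (size l); elim: m l => // m IHm [|a [|b l]] //= size_lt.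
- by rewrite big_ord0.
- by rewrite big_ord0.
by rewrite big_ord_recl IHm //; lia.
Qed.

Lemma pairs_prod_cat (l1 l2 : seq R) :
  ~~ odd (size l1) -> pairs_prod (l1 ++ l2) = pairs_prod l1 * pairs_prod l2.
Proof.
have [m] := ubnP (size l1); elim: m l1 => // m IHm [|a [|b l]] //= size_lt.
- by rewrite mul1r.
by rewrite negbK => l_even; rewrite IHm // ?mulrA //; lia.
Qed.

Lemma pairs_prod_ge1 (l : seq R) : all (>= 0) l -> 1 <= pairs_prod l.
Proof.
have [m] := ubnP (size l); elim: m l => // m IHm [|a [|b l]] //= size_lt.
move=> /and3P[a_ge0 b_ge0 l_ge0]; rewrite -[leLHS]mul1r ler_pM ?lerDl ?mulr_ge0 //.
by apply: IHm => //; lia.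
Qed.

Lemma pairs_prod_le_listing n (r : 'I_n -> R) (s : seq 'I_n) :
  (forall i, 0 <= r i) -> uniq s -> ~~ odd (size s) ->
  exists tau : 'S_n, pairs_prod (map r s) <= pairs_prod [seq r (tau i) | i <- enum 'I_n].
Proof.
move=> r_ge0 s_uniq s_even; pose e := s ++ [seq i <- enum 'I_n | i \notin s].
have /tuple_permP[tau e_tau] : perm_eq e (ord_tuple n).
  rewrite val_ord_tuple; apply: uniq_perm; rewrite ?enum_uniq //.
    rewrite cat_uniq s_uniq filter_uniq ?enum_uniq // andbT.
    by apply/hasPn => i; rewrite mem_filter => /andP[].
  by move=> i; rewrite mem_cat mem_filter mem_enum andbT orbN.
exists tau; have -> : [seq r (tau i) | i <- enum 'I_n] = map r e.
  by rewrite e_tau /= -map_comp; apply: eq_map => i /=; rewrite tnth_ord_tuple.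
have r_all_ge0 t : all (>= 0) (map r t) by apply/allP => _ /mapP[i _ ->].
rewrite /e map_cat pairs_prod_cat ?size_map // -[leLHS]mulr1 ler_wpM2l ?pairs_prod_ge1 //.
exact: le_trans ler01 (pairs_prod_ge1 _).
Qed.

End PairsProd.

Section Expansion.
Variables (R : realFieldType) (n : nat).

Lemma per_sub_weighted_fun_mx_le (r : 'I_n -> R) (g : 'I_n -> 'I_n) :
  (forall i, 0 <= r i) -> (forall i, r i <= 1) ->
  per (1%:M - weighted_fun_mx r g) <= derangement_sum r g.
Proof.
move=> r_ge0 r_le1; have [sum_ge0 _] := derangement_sum_bound r_ge0 r_le1 g.
rewrite per_sub_weighted_fun_mx -[leRHS]mul1r ler_wpM2r //.
apply: prodr_ile1 => i _; case: (g i == i); rewrite ?mulr1 ?mulr0 ?subr0 ?lexx ?ler01 //.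
by rewrite subr_ge0 r_le1 gerBl r_ge0.
Qed.

Lemma row_stochastic_factor (A : 'M[R]_n) : (forall i j, 0 <= A i j) ->
  exists w : 'M[R]_n, [/\ forall i j, 0 <= w i j, forall i, \sum_j w i j = 1
                        & forall i j, A i j = row_sum A i * w i j].
Proof.
move=> A_ge0.
pose w := \matrix_(i, j) if row_sum A i == 0 then (i == j)%:R else A i j / row_sum A i.
exists w; split=> [i j|i|i j]; rewrite /w ?mxE.
- by case: ifP; rewrite ?ler0n ?divr_ge0 ?sumr_ge0.
- under eq_bigr => j _ do rewrite mxE; case: (boolP (row_sum A i == 0)) => [_|ri_neq0].
    by rewrite (bigD1 i) //= eqxx big1 ?addr0 // => j /negbTE; rewrite eq_sym => ->.
  by rewrite -mulr_suml divff.
- case: ifPn => [/eqP ri0|ri_neq0]; last by rewrite mulrC divfK.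
  by rewrite ri0 mul0r; apply: (psumr_eq0P (fun k _ => A_ge0 i k) ri0).
Qed.

Lemma sum_prod_stochastic_rows (w : 'M[R]_n) : (forall i, \sum_j w i j = 1) ->
  \sum_(g : {ffun 'I_n -> 'I_n}) \prod_i w i (g i) = 1.
Proof. by move=> w_sum1; rewrite -bigA_distr_bigA big1. Qed.

Lemma per_sub_expand (A w : 'M[R]_n) (r : 'I_n -> R) :
  (forall i, \sum_j w i j = 1) -> (forall i j, A i j = r i * w i j) ->
  per (1%:M - A) =
  \sum_(g : {ffun 'I_n -> 'I_n}) (\prod_i w i (g i)) * per (1%:M - weighted_fun_mx r g).
Proof.
move=> w_sum1 A_rw.
have -> : 1%:M - A = \matrix_(i, j) \sum_l w i l * ((i == j)%:R - r i * (l == j)%:R).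
  apply/matrixP => i j; rewrite !mxE; under eq_bigr do rewrite mulrBr.
  rewrite sumrB -mulr_suml w_sum1 mul1r (bigD1 j) //= eqxx mulr1 big1 ?addr0.
    by rewrite A_rw mulrC.
  by move=> l /negbTE->; rewrite !mulr0.
rewrite per_sum_rows; apply: eq_bigr => g _; rewrite -per_scale_rows.
by congr per; apply/matrixP => i j; rewrite !mxE.
Qed.

End Expansion.

Theorem mainTheorem9 (R : realFieldType) (n : nat) (A : 'M[R]_n)
  (hn : ~~ odd n) (hA : row_substochastic A) :
  exists tau : 'S_n,
    let x := [seq row_sum A (tau i) | i <- enum 'I_n] in
    per (1%:M - A) <= \prod_(k < n./2) (1 + x`_(k.*2) * x`_(k.*2).+1).
Proof.
have [A_ge0 A_le1] := hA; set r := row_sum A.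
have r_ge0 i : 0 <= r i by apply: sumr_ge0.
pose listing_prod (t : 'S_n) := pairs_prod [seq r (t i) | i <- enum 'I_n].
have [tau _ tau_max] := @arg_maxP _ _ _ (1%g : 'S_n) xpredT listing_prod isT.
exists tau => x.
have -> : \prod_(k < n./2) (1 + x`_k.*2 * x`_k.*2.+1) = listing_prod tau.
  by rewrite /listing_prod pairs_prodE size_map size_enum_ord.
have [w [w_ge0 w_sum1 A_rw]] := row_stochastic_factor A_ge0.
rewrite (per_sub_expand w_sum1 A_rw) -[leRHS]mul1r.
rewrite -[in leRHS](sum_prod_stochastic_rows w_sum1) mulr_suml.
apply: ler_sum => g _; apply: ler_wpM2l; first by apply: prodr_ge0.
have [_ [s [s_uniq s_even _ sum_le]]] := derangement_sum_bound r_ge0 A_le1 g.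
have [t le_t] := pairs_prod_le_listing r_ge0 s_uniq s_even.
apply: le_trans (per_sub_weighted_fun_mx_le g r_ge0 A_le1) _.
exact: le_trans sum_le (le_trans le_t (tau_max t isT)).
Qed.
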